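(* Let $L$ be a linear order in which every cut $(I,J)$ with $I$ and $J$ both nonempty has a type. If $(C_k)_{k\in\omega}$ and $(D_l)_{l\in\omega}$ are two ladders in $L$, then there exist $k_0,l_0\in\omega$ such that $C_{k_0+n}=D_{l_0+n}$ for all $n\in\omega$. Consequently, if $(C_k)$ has spectrum $(n_k)_{k\in\omega}$ and $(D_l)$ has spectrum $(m_l)_{l\in\omega}$, then these spectra are tail-equivalent: there exist $k_0,l_0$ with $n_{k_0+n}=m_{l_0+n}$ for all $n\in\omega$.
   Context: A cut in a linear order $L$ is a pair $(I,J)$ where $I$ is an initial segment of $L$ and $J=L\setminus I$. For cuts $C_1=(I_1,J_1)$ and $C_2=(I_2,J_2)$, write $C_1<C_2$ if $I_1$ is a strict initial segment of $I_2$. For $n\in\omega$, a cut $C=(I,J)$ has type $n$, written $tp(C)=n$, if $I$ has a final segment isomorphic to the ordinal $\omega^n$ (so type $0$ means $I$ has a greatest element); a cut has at most one type. A sequence of cuts $\cdots<C_2<C_1<C_0$ in $L$, each with both sides nonempty, is a ladder if: (1) it is coinitial in $L$, i.e. for every $x\in L$ there is $k$ with $x$ not in the left side of $C_k$ (every point of $L$ is eventually to the right of the cuts); (2) $tp(C_{k+1})\ge tp(C_k)$ for all $k$; (3) for all $k$, every cut $D$ with $C_{k+1}<D<C_k$ satisfies $tp(D)<tp(C_k)$. A ladder $(C_k)$ has spectrum $(n_k)_{k\in\omega}$ if $tp(C_k)=n_k$ for all $k$. *)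

From Stdlib Require Import List Arith.
Import ListNotations.

Definition strict_linear_order {T : Type} (lt : T -> T -> Prop) : Prop :=
  (forall x, ~ lt x x) /\
  (forall x y z, lt x y -> lt y z -> lt x z) /\
  (forall x y, lt x y \/ x = y \/ lt y x).

(* A cut (I, L \ I) is represented by its left side I, an initial segment. *)
Definition initial_segment {T : Type} (lt : T -> T -> Prop) (I : T -> Prop) : Prop :=
  forall x y, lt x y -> I y -> I x.

Definition proper_cut {T : Type} (lt : T -> T -> Prop) (I : T -> Prop) : Prop :=
  initial_segment lt I /\ (exists x, I x) /\ (exists y, ~ I y).

Definition cut_lt {T : Type} (I1 I2 : T -> Prop) : Prop :=
  (forall x, I1 x -> I2 x) /\ (exists x, I2 x /\ ~ I1 x).

Definition cut_eq {T : Type} (I1 I2 : T -> Prop) : Prop :=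
  forall x, I1 x <-> I2 x.

(* The ordinal omega^n, realised as length-n lists of naturals ordered
   lexicographically (first coordinate most significant). *)
Fixpoint lexlt (l m : list nat) : Prop :=
  match l, m with
  | a :: l', b :: m' => a < b \/ (a = b /\ lexlt l' m')
  | _, _ => False
  end.

Definition iso_omega_pow {T : Type} (lt : T -> T -> Prop) (F : T -> Prop) (n : nat) : Prop :=
  exists f : T -> list nat,
    (forall x, F x -> length (f x) = n) /\
    (forall x y, F x -> F y -> (lt x y <-> lexlt (f x) (f y))) /\
    (forall l, length l = n -> exists x, F x /\ f x = l).

Definition final_segment_of {T : Type} (lt : T -> T -> Prop) (F I : T -> Prop) : Prop :=
  (forall x, F x -> I x) /\ (forall x y, F x -> I y -> lt x y -> F y).

Definition has_type {T : Type} (lt : T -> T -> Prop) (I : T -> Prop) (n : nat) : Prop :=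
  exists F, final_segment_of lt F I /\ iso_omega_pow lt F n.

Definition ladder {T : Type} (lt : T -> T -> Prop) (C : nat -> T -> Prop) : Prop :=
  (forall k, proper_cut lt (C k)) /\
  (forall k, cut_lt (C (S k)) (C k)) /\
  (forall x, exists k, ~ C k x) /\
  (forall k a b, has_type lt (C (S k)) a -> has_type lt (C k) b -> b <= a) /\
  (forall k (D : T -> Prop) a b, initial_segment lt D ->
     cut_lt (C (S k)) D -> cut_lt D (C k) ->
     has_type lt D a -> has_type lt (C k) b -> a < b).

(* Types are unique: two final segments of the same initial segment meet, so if they are
   isomorphic to omega^a and omega^b then omega^b embeds into omega^a and vice versa, while
   omega^(n+1) does not embed into omega^n because the lexicographic order on length-n lists
   is well founded.

   Two ladders C and D meet: if a rung satisfies D_(l+1) < C_i < D_l, then C_(i+1) < D_(l+1)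
   is impossible, since it would give tp(D_(l+1)) < tp(C_i) < tp(D_l) <= tp(D_(l+1)); as C is
   coinitial it eventually reaches D_(l+1) exactly.  Once C_j = D_m, the same monotonicity of
   types forces C_(j+1) = D_(m+1), so the ladders coincide from then on, and so do their
   spectra by uniqueness of types. *)

From Stdlib Require Import List Arith Lia Classical ClassicalEpsilon.

Lemma lexlt_app l l' r : lexlt l l' -> lexlt (l ++ r) (l' ++ r).
Proof.
  revert l'; induction l as [|a l IH]; intros [|b l']; simpl; try tauto.
  intros [H|[H0 H]]; [left | right; split]; auto.
Qed.

Definition lex_len (m : nat) (a b : list nat) : Prop := length a = m /\ lexlt a b.

Lemma lex_len_Acc m l : length l = m -> Acc (lex_len m) l.
Proof.
  revert l; induction m as [|m IHm]; intros l Hl.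
  - destruct l; [|discriminate].
    constructor; intros [|? ?] [_ H]; contradiction.
  - destruct l as [|h t]; [discriminate|]. injection Hl as Ht.
    pose proof (IHm t Ht) as Hacc; clear Ht.
    revert t Hacc; induction h as [h IHh] using (well_founded_induction lt_wf).
    intros t Hacc; induction Hacc as [t _ IHt].
    constructor; intros [|h' t'] [Hlen Hlt]; [contradiction|].
    injection Hlen as Hlen.
    destruct Hlt as [Hlt|[-> Hlt]].
    + apply IHh; auto.
    + apply IHt; split; auto.
Qed.

Lemma lex_len_wf m : well_founded (lex_len m).
Proof. intros l; constructor; intros y [Hy _]; apply lex_len_Acc, Hy. Qed.

Lemma lex_increasing_no_descent m (f : list nat -> list nat) :
  (forall l, length l = m -> length (f l) = m) ->
  (forall l l', length l = m -> length l' = m -> lexlt l l' -> lexlt (f l) (f l')) ->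
  forall x, length x = m -> ~ lexlt (f x) x.
Proof.
  intros Hlen Hmono x; induction x as [x IH] using (well_founded_induction (lex_len_wf m)).
  intros Hx Hfx.
  apply (IH (f x)); [split | |]; auto.
Qed.

Definition omega_pow_embeds (p q : nat) : Prop := exists g : list nat -> list nat,
  (forall l, length l = p -> length (g l) = q) /\
  (forall l l', length l = p -> length l' = p -> lexlt l l' -> lexlt (g l) (g l')).

Lemma omega_pow_embeds_trans p q r :
  omega_pow_embeds p q -> omega_pow_embeds q r -> omega_pow_embeds p r.
Proof. intros [g [Hg1 Hg2]] [h [Hh1 Hh2]]; exists (fun l => h (g l)); split; auto. Qed.

Lemma omega_pow_embeds_le p q : p <= q -> omega_pow_embeds p q.
Proof.
  intros H; exists (fun l => l ++ repeat 0 (q - p)); split.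
  - intros l Hl; rewrite length_app, repeat_length; lia.
  - intros l l' _ _; apply lexlt_app.
Qed.

Lemma omega_pow_embeds_succ_false n : ~ omega_pow_embeds (S n) n.
Proof.
  intros [g [Hg1 Hg2]].
  apply (lex_increasing_no_descent (S n) (fun l => 0 :: g l)) with (1 :: repeat 0 n).
  - intros l Hl; simpl; auto.
  - intros l l' Hl Hl' H; simpl; right; split; auto.
  - simpl; rewrite repeat_length; auto.
  - simpl; left; lia.
Qed.

Lemma omega_pow_embeds_antisym p q : omega_pow_embeds p q -> omega_pow_embeds q p -> p = q.
Proof.
  intros Hpq Hqp; destruct (lt_eq_lt_dec p q) as [[H|H]|H]; auto; exfalso.
  - apply (omega_pow_embeds_succ_false p).
    apply omega_pow_embeds_trans with q; [apply omega_pow_embeds_le; lia | auto].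
  - apply (omega_pow_embeds_succ_false q).
    apply omega_pow_embeds_trans with p; [apply omega_pow_embeds_le; lia | auto].
Qed.

Section Cuts.

Variables (T : Type) (lt : T -> T -> Prop).
Hypothesis Hlin : strict_linear_order lt.

Lemma cut_eq_sym (A B : T -> Prop) : cut_eq A B -> cut_eq B A.
Proof. intros H x; symmetry; auto. Qed.

Lemma cut_lt_trans (A B C : T -> Prop) : cut_lt A B -> cut_lt B C -> cut_lt A C.
Proof. intros [H1 _] [H2 [y [Hy1 Hy2]]]; split; [auto | exists y; split; auto]. Qed.

Lemma cut_lt_asym (A B : T -> Prop) : cut_lt A B -> ~ cut_lt B A.
Proof. intros [_ [x [Hx1 Hx2]]] [H2 _]; auto. Qed.

Lemma cut_lt_eq_r (A B C : T -> Prop) : cut_lt A B -> cut_eq B C -> cut_lt A C.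
Proof.
  intros [H1 [x [Hx1 Hx2]]] HE; split.
  - intros y Hy; apply HE; auto.
  - exists x; split; auto; apply HE; auto.
Qed.

Lemma cut_trichotomy (I1 I2 : T -> Prop) :
  initial_segment lt I1 -> initial_segment lt I2 ->
  cut_eq I1 I2 \/ cut_lt I1 I2 \/ cut_lt I2 I1.
Proof.
  intros H1 H2; destruct Hlin as [_ [_ Htri]].
  destruct (classic (forall x, I1 x -> I2 x)) as [Hs|Hs].
  - destruct (classic (exists x, I2 x /\ ~ I1 x)) as [He|He].
    + right; left; split; auto.
    + left; intros x; split; auto.
      intros Hx; apply NNPP; intros Hn; eauto.
  - apply not_all_ex_not in Hs as [x Hx].
    apply imply_to_and in Hx as [Hx1 Hx2].
    right; right; split; [|eauto].
    intros y Hy; destruct (Htri x y) as [H|[<-|H]]; [|contradiction|eauto].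
    exfalso; eauto.
Qed.

Lemma has_type_cut_eq (I J : T -> Prop) n :
  cut_eq I J -> has_type lt I n -> has_type lt J n.
Proof.
  intros HE [F [[H1 H2] Hiso]]; exists F; split; [split|]; auto.
  - intros x Hx; apply HE; auto.
  - intros x y Hx Hy; apply H2; auto; apply HE; auto.
Qed.

Lemma final_segments_meet (I F F' : T -> Prop) :
  final_segment_of lt F I -> final_segment_of lt F' I ->
  (exists x, F x) -> (exists x, F' x) -> exists z, F z /\ F' z.
Proof.
  intros [HFsub HF] [HF'sub HF'] [x Hx] [x' Hx'].
  destruct Hlin as [_ [_ Htri]].
  destruct (Htri x x') as [H|[<-|H]].
  - exists x'; split; [apply (HF x x') |]; auto.
  - eauto.
  - exists x; split; [| apply (HF' x' x)]; auto.
Qed.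

Lemma final_segments_omega_pow_embeds (I F F' : T -> Prop) a b :
  final_segment_of lt F I -> final_segment_of lt F' I ->
  iso_omega_pow lt F a -> iso_omega_pow lt F' b -> omega_pow_embeds b a.
Proof.
  intros HFI HF'I [f [Hfl [Hfo Hfs]]] [f' [Hf'l [Hf'o Hf's]]].
  destruct b as [|b]; [apply omega_pow_embeds_le; lia|].
  destruct (final_segments_meet I F F' HFI HF'I) as [z [Hz Hz']].
  { destruct (Hfs _ (repeat_length 0 a)) as [x [Hx _]]; eauto. }
  { destruct (Hf's _ (repeat_length 0 (S b))) as [x [Hx _]]; eauto. }
  destruct (f' z) as [|s st] eqn:Hs; [specialize (Hf'l z Hz'); rewrite Hs in Hf'l; discriminate|].
  (* Raising the leading digit above [s] lands strictly above [z] in [F'], hence inside [F]. *)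
  set (shift := fun l : list nat => (S s + hd 0 l) :: tl l).
  assert (Hex : forall l, exists y, length l = S b -> F' y /\ f' y = shift l).
  { intros l; destruct (Nat.eq_dec (length l) (S b)) as [E|E].
    - destruct (Hf's (shift l)) as [y Hy]; [|eauto].
      destruct l; simpl in *; lia.
    - exists z; contradiction. }
  destruct (choice _ Hex) as [pick Hpick].
  assert (HpickF : forall l, length l = S b -> F (pick l)).
  { intros l Hl; destruct (Hpick l Hl) as [H1 H2].
    destruct HFI as [_ HF], HF'I as [HF'sub _], Hlin as [_ [_ Htri]].
    destruct (Htri z (pick l)) as [H|[<-|H]]; eauto.
    exfalso; apply (Hf'o _ _ H1 Hz') in H; rewrite H2, Hs in H.
    destruct H as [H|[H _]]; simpl in H; lia. }
  exists (fun l => f (pick l)); split.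
  - intros l Hl; apply Hfl, HpickF, Hl.
  - intros l l' Hl Hl' Hll.
    apply (Hfo _ _ (HpickF l Hl) (HpickF l' Hl')).
    destruct (Hpick l Hl) as [H1 H2], (Hpick l' Hl') as [H1' H2'].
    apply (Hf'o _ _ H1 H1'); rewrite H2, H2'; unfold shift.
    destruct l, l'; simpl in *; try contradiction.
    destruct Hll as [H|[E H]]; [left; lia | right; split; auto].
Qed.

Lemma has_type_unique (I : T -> Prop) a b :
  has_type lt I a -> has_type lt I b -> a = b.
Proof.
  intros [F [HF Ha]] [F' [HF' Hb]].
  apply omega_pow_embeds_antisym.
  - apply (final_segments_omega_pow_embeds I F' F b a); auto.
  - apply (final_segments_omega_pow_embeds I F F' a b); auto.
Qed.

End Cuts.

Section Ladders.

Variables (T : Type) (lt : T -> T -> Prop).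
Hypothesis Hlin : strict_linear_order lt.
Hypothesis Htypes : forall I, proper_cut lt I -> exists n, has_type lt I n.

Lemma ladder_eventually_below C (HC : ladder lt C) (I : T -> Prop) x :
  initial_segment lt I -> I x -> exists k, cut_lt (C k) I.
Proof.
  intros HI Hx; destruct HC as [Hp [_ [Hco _]]].
  destruct (Hco x) as [k Hk]; exists k; split; [|eauto].
  intros y Hy; destruct Hlin as [_ [_ Htri]], (Hp k) as [Hi _].
  destruct (Htri x y) as [H|[<-|H]]; [exfalso; eauto | contradiction | eauto].
Qed.

Lemma ladder_bracket D (HD : ladder lt D) (I : T -> Prop) x :
  initial_segment lt I -> I x -> ~ cut_lt (D 0) I ->
  exists l, cut_eq I (D l) \/ (cut_lt (D (S l)) I /\ cut_lt I (D l)).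
Proof.
  intros HI Hx Hnot.
  destruct (ladder_eventually_below D HD I x HI Hx) as [m Hm].
  induction m as [|m IH]; [contradiction|].
  destruct (cut_trichotomy T lt Hlin (D m) I (proj1 (proj1 HD m)) HI) as [E|[E|E]].
  - exists m; left; apply cut_eq_sym, E.
  - auto.
  - exists m; right; auto.
Qed.

Lemma ladder_rung_between C D (HC : ladder lt C) (HD : ladder lt D) i l :
  cut_lt (D (S l)) (C i) -> cut_lt (C i) (D l) -> ~ cut_lt (C (S i)) (D (S l)).
Proof.
  intros H1 H2 H.
  destruct HC as [HpC [_ [_ [_ HgapC]]]], HD as [HpD [_ [_ [HmonD HgapD]]]].
  destruct (Htypes _ (HpC i)) as [c Hc], (Htypes _ (HpD l)) as [d Hd],
    (Htypes _ (HpD (S l))) as [e He].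
  pose proof (HgapC i (D (S l)) e c (proj1 (HpD _)) H H1 He Hc).
  pose proof (HgapD l (C i) c d (proj1 (HpC _)) H1 H2 Hc Hd).
  pose proof (HmonD l e d He Hd).
  lia.
Qed.

Lemma ladder_antitone C (HC : ladder lt C) k n x : C (n + k) x -> C k x.
Proof. induction n as [|n IH]; [auto|]; intros Hx; apply IH, (proj1 (proj1 (proj2 HC) _)), Hx. Qed.

Lemma ladder_reaches_rung C D (HC : ladder lt C) (HD : ladder lt D) i l :
  cut_lt (D (S l)) (C i) -> cut_lt (C i) (D l) -> exists k, cut_eq (C k) (D (S l)).
Proof.
  intros H1 H2.
  destruct (proj1 HD (S l)) as [HI [[y Hy] _]].
  destruct (ladder_eventually_below C HC _ y HI Hy) as [n [Hn Hn']].
  assert (Hbelow : cut_lt (C (i + n)) (D (S l))).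
  { split.
    - intros x Hx; apply Hn, (ladder_antitone C HC n i); exact Hx.
    - destruct Hn' as [w [Hw Hw']]; exists w; split; [exact Hw|].
      intros Hw''; apply Hw', (ladder_antitone C HC n i); exact Hw''. }
  clear Hn Hn'; revert i H1 H2 Hbelow; induction n as [|n IH]; intros i H1 H2 Hbelow.
  - rewrite Nat.add_0_r in Hbelow; exfalso; eapply cut_lt_asym; eauto.
  - destruct (cut_trichotomy T lt Hlin (C (S i)) (D (S l))
      (proj1 (proj1 HC _)) (proj1 (proj1 HD _))) as [E|[E|E]]; [eauto| |].
    + exfalso; exact (ladder_rung_between C D HC HD i l H1 H2 E).
    + apply (IH (S i)); auto.
      * eapply cut_lt_trans; [apply HC | exact H2].
      * rewrite <- Nat.add_succ_comm in Hbelow; exact Hbelow.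
Qed.

Lemma ladders_meet C D (HC : ladder lt C) (HD : ladder lt D) :
  exists k l, cut_eq (C k) (D l).
Proof.
  assert (Hwlog : forall C' D', ladder lt C' -> ladder lt D' -> ~ cut_lt (D' 0) (C' 0) ->
                  exists k l, cut_eq (C' k) (D' l)).
  { intros C' D' HC' HD' Hnot.
    destruct (proj1 HC' 0) as [HI [[x Hx] _]].
    destruct (ladder_bracket D' HD' (C' 0) x HI Hx Hnot) as [l [E|[E1 E2]]]; [eauto|].
    destruct (ladder_reaches_rung C' D' HC' HD' 0 l E1 E2) as [k Hk]; eauto. }
  destruct (classic (cut_lt (D 0) (C 0))) as [H|H]; [|auto].
  destruct (Hwlog D C HD HC (cut_lt_asym T _ _ H)) as [l [k E]].
  exists k, l; apply cut_eq_sym, E.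
Qed.

Lemma ladder_succ_not_below C D (HC : ladder lt C) (HD : ladder lt D) j m :
  cut_eq (C j) (D m) -> ~ cut_lt (C (S j)) (D (S m)).
Proof.
  intros E H.
  destruct HC as [HpC [_ [_ [_ HgapC]]]], HD as [HpD [HdescD [_ [HmonD _]]]].
  destruct (Htypes _ (HpC j)) as [b Hb], (Htypes _ (HpD (S m))) as [e He].
  assert (Hbelow : cut_lt (D (S m)) (C j))
    by (eapply cut_lt_eq_r; [apply HdescD | apply cut_eq_sym, E]).
  pose proof (HgapC j (D (S m)) e b (proj1 (HpD _)) H Hbelow He Hb).
  pose proof (HmonD m e b He (has_type_cut_eq T lt _ _ b E Hb)).
  lia.
Qed.

Lemma ladder_succ_eq C D (HC : ladder lt C) (HD : ladder lt D) j m :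
  cut_eq (C j) (D m) -> cut_eq (C (S j)) (D (S m)).
Proof.
  intros E.
  destruct (cut_trichotomy T lt Hlin (C (S j)) (D (S m))
    (proj1 (proj1 HC _)) (proj1 (proj1 HD _))) as [H|[H|H]]; [auto | exfalso..].
  - exact (ladder_succ_not_below C D HC HD j m E H).
  - exact (ladder_succ_not_below D C HD HC m j (cut_eq_sym T _ _ E) H).
Qed.

Lemma ladders_tail_eq C D (HC : ladder lt C) (HD : ladder lt D) :
  exists k0 l0, forall n, cut_eq (C (k0 + n)) (D (l0 + n)).
Proof.
  destruct (ladders_meet C D HC HD) as [k [l E]].
  exists k, l; induction n as [|n IH].
  - rewrite !Nat.add_0_r; exact E.
  - rewrite !Nat.add_succ_r; apply ladder_succ_eq; auto.
Qed.

End Ladders.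

Theorem mainTheorem4 (T : Type) (lt : T -> T -> Prop)
  (Hlin : strict_linear_order lt)
  (Htypes : forall I, proper_cut lt I -> exists n, has_type lt I n)
  (C D : nat -> T -> Prop)
  (HC : ladder lt C) (HD : ladder lt D) :
  (exists k0 l0, forall n, cut_eq (C (k0 + n)) (D (l0 + n))) /\
  (forall ns ms : nat -> nat,
     (forall k, has_type lt (C k) (ns k)) ->
     (forall l, has_type lt (D l) (ms l)) ->
     exists k0 l0, forall n, ns (k0 + n) = ms (l0 + n)).
Proof.
  destruct (ladders_tail_eq T lt Hlin Htypes C D HC HD) as [k0 [l0 E]].
  split; [eauto|].
  intros ns ms Hns Hms; exists k0, l0; intros n.
  apply (has_type_unique T lt Hlin (D (l0 + n))); [|apply Hms].
  apply (has_type_cut_eq T lt (C (k0 + n))); auto.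
Qed.
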